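(* Consider the planar optimal control problem of minimizing $J=-m(t_f)$ over the thrust parameters $T_1,T_2$, the free final time $t_f$ and the measurable unit thrust direction $\vec u(t)$, subject to $$\dot{\vec r}=\vec v,\qquad \dot{\vec v}=-\frac{\mu}{r^3}\vec r+\frac{T(t)}{m}\vec u,\qquad \dot m=-\frac{T(t)}{v_e},$$ with fixed initial state $(\vec r_0,\vec v_0,m_0)$ at $t_0$ and final constraints $w(t_f)=w_f$, $h(t_f)=h_f$, where the thrust follows the linear model $T(t)=T_1+(t-t_0)T_2$ and is assumed strictly positive on $[t_0,t_f]$. Let $(\vec p_r,\vec p_v,p_m,p_0)$ be costates and multiplier satisfying the Pontryagin conditions listed in the context, in particular the parameter stationarity conditions $$\int_{t_0}^{t_f}\frac{\partial T}{\partial T_1}\,\Phi\,dt=0,\qquad \int_{t_0}^{t_f}\frac{\partial T}{\partial T_2}\,\Phi\,dt=0,\qquad \Phi:=\frac{p_v}{m}-\frac{p_m}{v_e},\ p_v=\|\vec p_v\|.$$ Then, with $\Psi:=m\,p_m$, one has $\Psi(t_f)=\Psi(t_0)$, i.e. $$p_m(t_0)\,m(t_0)=-p_0\,m(t_f).$$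
   Context: Planar (two-dimensional) motion in an Earth-centered inertial frame; $\vec r,\vec v,m$ are position, velocity, mass; $r=\|\vec r\|$; $\mu>0$ is the gravitational constant; $v_e>0$ the exhaust velocity; $\vec u$ a unit vector. Energy per unit mass $w=\tfrac{v^2}{2}-\tfrac{\mu}{r}$, angular momentum $\vec h=\vec r\times\vec v$, $h=\|\vec h\|$. Hamiltonian $H=\vec p_r^{\,t}\vec v+\vec p_v^{\,t}\big(-\tfrac{\mu}{r^3}\vec r+\tfrac{T}{m}\vec u\big)-p_m\tfrac{T}{v_e}$. Pontryagin conditions: maximization gives $\vec u=\vec p_v/p_v$ so that $H=H_0+T\Phi$ with $H_0=\vec p_r^{\,t}\vec v+\vec p_v^{\,t}\vec g$; costate equations $\dot{\vec p}_r=-\tfrac{\partial \vec g}{\partial\vec r}\vec p_v$, $\dot{\vec p}_v=-\vec p_r$, $\dot p_m=\tfrac{T}{m^2}p_v$; transversality on mass $p_m(t_f)=-p_0$ with $p_0\le 0$ a normalization multiplier; $H\equiv 0$. *)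

From Stdlib Require Import Reals Lra.
Open Scope R_scope.

Definition vec := (R * R)%type.
Definition vx (a : vec) : R := fst a.
Definition vy (a : vec) : R := snd a.
Definition dot (a b : vec) : R := vx a * vx b + vy a * vy b.
Definition vnorm (a : vec) : R := sqrt (dot a a).
Definition vadd (a b : vec) : vec := (vx a + vx b, vy a + vy b).
Definition vscale (k : R) (a : vec) : vec := (k * vx a, k * vy a).
(* z-component of the planar cross product r x v *)
Definition cross (a b : vec) : R := vx a * vy b - vy a * vx b.

Definition grav (mu : R) (r : vec) : vec := vscale (- mu / vnorm r ^ 3) r.
(* (dg/dr) p  (dg/dr is symmetric): mu/r^3 ( -p + 3 (r.p)/r^2 r ) *)
Definition grav_jac_mul (mu : R) (r p : vec) : vec :=
  vadd (vscale (- mu / vnorm r ^ 3) p)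
       (vscale (3 * mu * dot r p / vnorm r ^ 5) r).

Definition energy (mu : R) (r v : vec) : R := vnorm v ^ 2 / 2 - mu / vnorm r.
Definition angmom (r v : vec) : R := Rabs (cross r v).

Definition thrust (T1 T2 t0 t : R) : R := T1 + (t - t0) * T2.

Definition Phi (ve : R) (m : R) (pv : vec) (pm : R) : R := vnorm pv / m - pm / ve.

Definition Hamil (mu ve T : R) (r v : vec) (m : R) (pr pv : vec) (pm : R) (u : vec) : R :=
  dot pr v + dot pv (vadd (grav mu r) (vscale (T / m) u)) - pm * T / ve.

From Stdlib Require Import Reals Lra.
From Coquelicot Require Import Coquelicot.
Open Scope R_scope.

(* Along the extremal, d/dt (m p_m) = -(T/v_e) p_m + m (T/m^2) p_v = T Phi.
   Since T = T1 + (t - t0) T2, the integral of T Phi over [t0, tf] is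
   T1 times the first stationarity integral plus T2 times the second, hence 0,
   so m p_m takes the same value at t0 and tf, where p_m (tf) = - p0. *)

Definition clamp (a b x : R) : R := Rmax a (Rmin b x).

Lemma clamp_id a b x : a <= x <= b -> clamp a b x = x.
Proof. intros H. unfold clamp, Rmax, Rmin. repeat destruct Rle_dec; lra. Qed.

Lemma clamp_in a b x : a <= b -> a <= clamp a b x <= b.
Proof. intros H. unfold clamp, Rmax, Rmin. repeat destruct Rle_dec; lra. Qed.

Lemma clamp_lipschitz a b x y :
  a <= b -> Rabs (clamp a b x - clamp a b y) <= Rabs (x - y).
Proof.
  intros H. unfold clamp, Rmax, Rmin.
  repeat destruct Rle_dec; unfold Rabs; repeat destruct Rcase_abs; lra.
Qed.

Lemma continuity_pt_clamp a b x : a <= b -> continuity_pt (clamp a b) x.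
Proof.
  intros H eps Heps. exists eps. split; [lra|].
  intros y [_ Hy]. simpl in *. unfold R_dist in *.
  eapply Rle_lt_trans; [apply clamp_lipschitz|]; lra.
Qed.

Lemma continuity_pt_vnorm (p : R -> vec) t :
  continuity_pt (fun s => vx (p s)) t -> continuity_pt (fun s => vy (p s)) t ->
  continuity_pt (fun s => vnorm (p s)) t.
Proof.
  intros Hx Hy. unfold vnorm, dot.
  apply (continuity_pt_comp (fun s => vx (p s) * vx (p s) + vy (p s) * vy (p s)) sqrt).
  - apply continuity_pt_plus; apply continuity_pt_mult; assumption.
  - apply continuity_pt_sqrt. nra.
Qed.

Lemma continuity_pt_Phi ve (m : R -> R) (pv : R -> vec) (pm : R -> R) t :
  continuity_pt m t -> continuity_pt (fun s => vx (pv s)) t ->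
  continuity_pt (fun s => vy (pv s)) t -> continuity_pt pm t -> m t <> 0 ->
  continuity_pt (fun s => Phi ve (m s) (pv s) (pm s)) t.
Proof.
  intros Hm Hx Hy Hpm Hm0. unfold Phi.
  apply (continuity_pt_minus (fun s => vnorm (pv s) / m s) (fun s => pm s / ve)).
  - apply (continuity_pt_div (fun s => vnorm (pv s)) m); auto.
    apply continuity_pt_vnorm; assumption.
  - apply (continuity_pt_mult pm (fun _ => / ve)); auto.
    apply continuity_pt_const. intros ? ?; reflexivity.
Qed.

Section FundamentalTheorem.

Variables (F f : R -> R) (a b : R).
Hypothesis Hab : a < b.
Hypothesis F_cont : forall x, a <= x <= b -> continuity_pt F x.
Hypothesis F_deriv : forall x, a < x < b -> derivable_pt_lim F x (f x).
Hypothesis f_cont : forall x, a <= x <= b -> continuity_pt f x.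

(* Extending f by constants outside [a, b] makes it continuous on all of R,
   so that its integral function is differentiable everywhere. *)
Lemma continuity_pt_clamp_ext x : continuity_pt (fun y => f (clamp a b y)) x.
Proof.
  apply (continuity_pt_comp (clamp a b) f).
  - apply continuity_pt_clamp; lra.
  - apply f_cont, clamp_in; lra.
Qed.

Lemma is_derive_RInt_clamp_ext x :
  is_derive (fun y => RInt (fun z => f (clamp a b z)) a y) x (f (clamp a b x)).
Proof.
  apply (@is_derive_RInt R_CompleteNormedModule (fun z => f (clamp a b z)) _ a).
  - apply filter_forall. intros y. apply (@RInt_correct R_CompleteNormedModule).
    apply (@ex_RInt_continuous R_CompleteNormedModule). intros z _.
    apply continuity_pt_filterlim, continuity_pt_clamp_ext.
  - apply continuity_pt_filterlim, continuity_pt_clamp_ext.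
Qed.

Lemma RInt_derive_interior : RInt f a b = F b - F a.
Proof.
  set (fe := fun z => f (clamp a b z)).
  set (G := fun x => F x - RInt fe a x).
  assert (HG : G b - G a = 0).
  { destruct (MVT_gen G a b (fun _ => 0)) as (c & _ & Hc).
    - rewrite Rmin_left, Rmax_right by lra. intros x Hx.
      replace 0 with (minus (f x) (fe x)).
      + apply (@is_derive_minus R_AbsRing R_NormedModule).
        * apply is_derive_Reals, F_deriv; assumption.
        * apply is_derive_RInt_clamp_ext.
      + unfold fe. rewrite clamp_id by lra. apply (@minus_eq_zero R_AbelianGroup).
    - rewrite Rmin_left, Rmax_right by lra. intros x Hx.
      apply (continuity_pt_minus F (fun y => RInt fe a y)); [apply F_cont; assumption|].
      apply continuity_pt_filterlim, (@ex_derive_continuous R_AbsRing R_NormedModule).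
      eexists. apply is_derive_RInt_clamp_ext.
    - lra. }
  assert (Hfe : RInt f a b = RInt fe a b).
  { apply RInt_ext. rewrite Rmin_left, Rmax_right by lra. intros x Hx.
    unfold fe. rewrite clamp_id; lra. }
  unfold G in HG. rewrite RInt_point in HG. unfold zero in HG; simpl in HG. lra.
Qed.

End FundamentalTheorem.

Lemma derivable_pt_lim_mass_costate ve T (m pm : R -> R) (pv : vec) t :
  m t <> 0 -> derivable_pt_lim m t (- T / ve) ->
  derivable_pt_lim pm t (T / m t ^ 2 * vnorm pv) ->
  derivable_pt_lim (fun s => m s * pm s) t (T * Phi ve (m t) pv (pm t)).
Proof.
  intros Hm0 Hm Hpm.
  replace (T * Phi ve (m t) pv (pm t))
    with (- T / ve * pm t + m t * (T / m t ^ 2 * vnorm pv)).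
  - apply (derivable_pt_lim_mult m pm t); assumption.
  - assert (Hinv : m t * / m t ^ 2 = / m t) by (field; assumption).
    unfold Phi, Rdiv. rewrite <- Hinv. ring.
Qed.

Lemma RInt_thrust_mul T1 T2 t0 (g : R -> R) a b
  (H1 : Riemann_integrable (fun t => 1 * g t) a b)
  (H2 : Riemann_integrable (fun t => (t - t0) * g t) a b) :
  RInt (fun t => thrust T1 T2 t0 t * g t) a b = T1 * RiemannInt H1 + T2 * RiemannInt H2.
Proof.
  apply is_RInt_unique.
  apply (is_RInt_ext (fun t => plus (scal T1 (1 * g t)) (scal T2 ((t - t0) * g t)))).
  - intros x _. unfold thrust, plus, scal; simpl; unfold mult; simpl. ring.
  - apply (@is_RInt_plus R_NormedModule); apply (@is_RInt_scal R_NormedModule);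
      apply ex_RInt_Reals_aux_1.
Qed.

Theorem mainTheorem1
  (mu ve : R) (Hmu : 0 < mu) (Hve : 0 < ve)
  (t0 tf T1 T2 : R) (Ht : t0 < tf)
  (r0 v0 : vec) (m0 wf hf : R)
  (r v : R -> vec) (m : R -> R) (u : R -> vec)
  (pr pv : R -> vec) (pm : R -> R) (p0 : R)
  (HT : forall t, t0 <= t <= tf -> 0 < thrust T1 T2 t0 t)
  (Hr : forall t, t0 <= t <= tf -> 0 < vnorm (r t))
  (Hm : forall t, t0 <= t <= tf -> 0 < m t)
  (Hu : forall t, t0 <= t <= tf -> vnorm (u t) = 1)
  (Hcont : forall t, t0 <= t <= tf ->
     continuity_pt (fun s => vx (r s)) t /\ continuity_pt (fun s => vy (r s)) t /\
     continuity_pt (fun s => vx (v s)) t /\ continuity_pt (fun s => vy (v s)) t /\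
     continuity_pt m t /\
     continuity_pt (fun s => vx (pr s)) t /\ continuity_pt (fun s => vy (pr s)) t /\
     continuity_pt (fun s => vx (pv s)) t /\ continuity_pt (fun s => vy (pv s)) t /\
     continuity_pt pm t)
  (Hdr : forall t, t0 < t < tf ->
     derivable_pt_lim (fun s => vx (r s)) t (vx (v t)) /\
     derivable_pt_lim (fun s => vy (r s)) t (vy (v t)))
  (Hdv : forall t, t0 < t < tf ->
     derivable_pt_lim (fun s => vx (v s)) t
       (vx (vadd (grav mu (r t)) (vscale (thrust T1 T2 t0 t / m t) (u t)))) /\
     derivable_pt_lim (fun s => vy (v s)) t
       (vy (vadd (grav mu (r t)) (vscale (thrust T1 T2 t0 t / m t) (u t)))))
  (Hdm : forall t, t0 < t < tf -> derivable_pt_lim m t (- thrust T1 T2 t0 t / ve))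
  (Hinit : r t0 = r0 /\ v t0 = v0 /\ m t0 = m0)
  (Hfinal : energy mu (r tf) (v tf) = wf /\ angmom (r tf) (v tf) = hf)
  (Hdpr : forall t, t0 < t < tf ->
     derivable_pt_lim (fun s => vx (pr s)) t (- vx (grav_jac_mul mu (r t) (pv t))) /\
     derivable_pt_lim (fun s => vy (pr s)) t (- vy (grav_jac_mul mu (r t) (pv t))))
  (Hdpv : forall t, t0 < t < tf ->
     derivable_pt_lim (fun s => vx (pv s)) t (- vx (pr t)) /\
     derivable_pt_lim (fun s => vy (pv s)) t (- vy (pr t)))
  (Hdpm : forall t, t0 < t < tf ->
     derivable_pt_lim pm t (thrust T1 T2 t0 t / (m t) ^ 2 * vnorm (pv t)))
  (Hmax : forall t, t0 <= t <= tf ->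
     forall w : vec, vnorm w = 1 -> dot (pv t) w <= dot (pv t) (u t))
  (Hp0 : p0 <= 0) (Hpmf : pm tf = - p0)
  (HH : forall t, t0 <= t <= tf ->
     Hamil mu ve (thrust T1 T2 t0 t) (r t) (v t) (m t) (pr t) (pv t) (pm t) (u t) = 0)
  (* stationarity with respect to T1 (dT/dT1 = 1) *)
  (HI1 : Riemann_integrable (fun t => 1 * Phi ve (m t) (pv t) (pm t)) t0 tf)
  (HI1z : RiemannInt HI1 = 0)
  (* stationarity with respect to T2 (dT/dT2 = t - t0) *)
  (HI2 : Riemann_integrable (fun t => (t - t0) * Phi ve (m t) (pv t) (pm t)) t0 tf)
  (HI2z : RiemannInt HI2 = 0) :
  pm t0 * m t0 = - p0 * m tf.
Proof.
  assert (Hmass_costate :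
    RInt (fun t => thrust T1 T2 t0 t * Phi ve (m t) (pv t) (pm t)) t0 tf
    = m tf * pm tf - m t0 * pm t0).
  { apply (RInt_derive_interior (fun t => m t * pm t)); [exact Ht| | |];
      intros t Htt.
    - destruct (Hcont t Htt) as (_&_&_&_&Cm&_&_&_&_&Cpm).
      apply continuity_pt_mult; assumption.
    - assert (Hmt := Hm t (conj (Rlt_le _ _ (proj1 Htt)) (Rlt_le _ _ (proj2 Htt)))).
      apply derivable_pt_lim_mass_costate; [lra | apply Hdm | apply Hdpm]; assumption.
    - destruct (Hcont t Htt) as (_&_&_&_&Cm&_&_&Cpx&Cpy&Cpm).
      apply (continuity_pt_mult (fun s => thrust T1 T2 t0 s)).
      + unfold thrust. reg.
      + apply continuity_pt_Phi; try assumption.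
        specialize (Hm t Htt). lra. }
  rewrite (RInt_thrust_mul T1 T2 t0 (fun t => Phi ve (m t) (pv t) (pm t)) t0 tf HI1 HI2),
    HI1z, HI2z, Hpmf in Hmass_costate.
  lra.
Qed.
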